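(* Let $N, N_{\tilde y}, M, p \in \mathbb{N}$ with $p\le N$, $X\in\mathbb{R}^{N\times M}$, $\tilde Y \in \mathbb{R}^{N_{\tilde y}\times M}$, $\lambda\ge0$, $\Omega=\{1,\dots,N\}$. Let $\tilde Y = U\Sigma V$ be a singular value decomposition ($U,V$ orthogonal, $\Sigma$ with diagonal entries $\sigma_1(\tilde Y)\ge\sigma_2(\tilde Y)\ge\cdots$), and for $r\le\operatorname{rank}\tilde Y$ let $Z = \Sigma_{1:r,1:r}V_{1:r}$ ($V_{1:r}$ = first $r$ rows of $V$). Let $\bar S^{\mathrm r}_0=\emptyset$ and for $k\ge1$, $\bar s^{\mathrm r}_k \in \arg\max_{i\in\mathcal{F}(\bar S^{\mathrm r}_{k-1})} \{J_Z(\bar S^{\mathrm r}_{k-1}\cup\{i\}) - J_Z(\bar S^{\mathrm r}_{k-1})\}$, $\bar S^{\mathrm r}_k=\bar S^{\mathrm r}_{k-1}\cup\{\bar s^{\mathrm r}_k\}$, and let $\bar s^{\mathrm r,2}_k \in \arg\max_{i\in\mathcal{F}(\bar S^{\mathrm r}_{k-1})\setminus\{\bar s^{\mathrm r}_k\}}\{J_Z(\bar S^{\mathrm r}_{k-1}\cup\{i\}) - J_Z(\bar S^{\mathrm r}_{k-1})\}$ (the second-best element). Similarly let $\bar S^{\mathrm o}_0=\emptyset$, $\bar s^{\mathrm o}_k\in\arg\max_{i\in\mathcal{F}(\bar S^{\mathrm o}_{k-1})}\{J_{\tilde Y}(\bar S^{\mathrm o}_{k-1}\cup\{i\}) - J_{\tilde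 Y}(\bar S^{\mathrm o}_{k-1})\}$, $\bar S^{\mathrm o}_k = \bar S^{\mathrm o}_{k-1}\cup\{\bar s^{\mathrm o}_k\}$. If there is $k'\in\{1,\dots,p\}$ such that for every $k\in\{1,\dots,k'\}$ \[ J_Z(\bar S^{\mathrm r}_k) - J_Z(\bar S^{\mathrm r}_{k-1}\cup\{\bar s^{\mathrm r,2}_k\}) > \sum_{i=r+1}^{\operatorname{rank}\tilde Y}\sigma_i^2(\tilde Y), \] then $\bar S^{\mathrm r}_{k'} = \bar S^{\mathrm o}_{k'}$.
   Context: For a matrix $Y$ with $M$ columns and $S\subset\Omega$ with $X_SX_S^\top+\lambda I_{|S|}\succ0$, $J_Y(S) = \operatorname{tr}\{ Y X_S^\top (X_S X_S^\top + \lambda I_{|S|})^{-1} X_S Y^\top \}$, where $X_S$ is the submatrix of rows of $X$ indexed by $S$; $J_Y(\emptyset)=0$. For $S\subset\Omega$, the feasible set is $\mathcal{F}(S) = \{ i\in\Omega\setminus S : X_{S'}X_{S'}^\top + \lambda I_{|S'|}\succ0,\ S'=S\cup\{i\}\}$; the greedy sequences are assumed well defined (the relevant feasible sets nonempty, with at least two elements for defining $\bar s^{\mathrm r,2}_k$). *)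

From HB Require Import structures.
From mathcomp Require Import all_boot all_order all_algebra.
Set Implicit Arguments. Unset Strict Implicit. Unset Printing Implicit Defensive.
Import Order.TTheory GRing.Theory Num.Theory.
Local Open Scope ring_scope.

Section Defs.
Variable R : realFieldType.

Definition rows_of (N M : nat) (X : 'M[R]_(N, M)) (S : {set 'I_N}) : 'M[R]_(#|S|, M) :=
  \matrix_(i < #|S|, j < M) X (enum_val i) j.

Definition gram (N M : nat) (X : 'M[R]_(N, M)) (lam : R) (S : {set 'I_N}) : 'M[R]_#|S| :=
  rows_of X S *m (rows_of X S)^T + lam%:M.

Definition J (N M K : nat) (X : 'M[R]_(N, M)) (lam : R) (Y : 'M[R]_(K, M))
  (S : {set 'I_N}) : R :=
  \tr (Y *m (rows_of X S)^T *m invmx (gram X lam S) *m rows_of X S *m Y^T).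

Definition posdef (n : nat) (A : 'M[R]_n) : Prop :=
  A^T = A /\ forall v : 'rV[R]_n, v != 0 -> 0 < (v *m A *m v^T) 0 0.

Definition feasible (N M : nat) (X : 'M[R]_(N, M)) (lam : R) (S : {set 'I_N})
  (i : 'I_N) : Prop :=
  i \notin S /\ posdef (gram X lam (i |: S)).

Definition gain (N M K : nat) (X : 'M[R]_(N, M)) (lam : R) (Y : 'M[R]_(K, M))
  (S : {set 'I_N}) (i : 'I_N) : R := J X lam Y (i |: S) - J X lam Y S.

Definition greedy (N M K : nat) (X : 'M[R]_(N, M)) (lam : R) (Y : 'M[R]_(K, M))
  (p : nat) (s : nat -> 'I_N) (S : nat -> {set 'I_N}) : Prop :=
  S 0%N = set0 /\
  forall k, (1 <= k <= p)%N ->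
    [/\ feasible X lam (S k.-1) (s k),
        (forall i, feasible X lam (S k.-1) i ->
           gain X lam Y (S k.-1) i <= gain X lam Y (S k.-1) (s k)) &
        S k = s k |: S k.-1].

Definition second_best (N M K : nat) (X : 'M[R]_(N, M)) (lam : R) (Y : 'M[R]_(K, M))
  (p : nat) (s s2 : nat -> 'I_N) (S : nat -> {set 'I_N}) : Prop :=
  forall k, (1 <= k <= p)%N ->
    [/\ feasible X lam (S k.-1) (s2 k), s2 k != s k &
        forall i, feasible X lam (S k.-1) i -> i != s k ->
           gain X lam Y (S k.-1) i <= gain X lam Y (S k.-1) (s2 k)].

Definition orthogonal_mx (n : nat) (U : 'M[R]_n) : Prop := U^T *m U = 1%:M.

Definition diag_rect (m n : nat) (sigma : nat -> R) : 'M[R]_(m, n) :=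
  \matrix_(i < m, j < n) (if (i == j :> nat) then sigma i else 0).

Definition is_svd (K M : nat) (Y : 'M[R]_(K, M)) (U : 'M[R]_K) (sigma : nat -> R)
  (V : 'M[R]_M) : Prop :=
  [/\ orthogonal_mx U, orthogonal_mx V,
      (forall i, (i < minn K M)%N -> 0 <= sigma i),
      (forall i j, (i <= j)%N -> (j < minn K M)%N -> sigma j <= sigma i) &
      Y = U *m diag_rect K M sigma *m V].

Lemma rank_le_rows (K M r : nat) (Y : 'M[R]_(K, M)) : (r <= \rank Y)%N -> (r <= K)%N.
Proof. by move=> h; apply: leq_trans h (rank_leq_row Y). Qed.

Lemma rank_le_cols (K M r : nat) (Y : 'M[R]_(K, M)) : (r <= \rank Y)%N -> (r <= M)%N.
Proof. by move=> h; apply: leq_trans h (rank_leq_col Y). Qed.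

(* Z = Sigma_{1:r,1:r} V_{1:r} *)
Definition Zmat (K M r : nat) (Y : 'M[R]_(K, M)) (sigma : nat -> R) (V : 'M[R]_M)
  (hr : (r <= \rank Y)%N) : 'M[R]_(r, M) :=
  mxsub (widen_ord (rank_le_rows hr)) (widen_ord (rank_le_cols hr))
        (diag_rect K M sigma)
  *m rowsub (widen_ord (rank_le_cols hr)) V.

End Defs.

(* J_Y(S) is the sum, over the rows y of Y, of the quadratic form
   q_S(y) = y X_S^T (X_S X_S^T + lam I)^-1 X_S y^T, and 0 <= q_S(y) <= |y|^2.
   Writing Y = U Sigma V, the orthogonal factor U drops out of the trace, the
   rows of Sigma V are sigma_j v_j with |v_j| = 1, and Z consists of the first r
   of them.  Hence 0 <= J_Y(S) - J_Z(S) <= sigma_(r+1)^2 + ... + sigma_rank^2 for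
   every feasible S.  At each step the gap hypothesis says that the greedy choice
   for J_Z beats every other candidate by more than this tail, so it is also the
   unique greedy choice for J_Y, and the two greedy sequences agree step by step. *)

From HB Require Import structures.
From mathcomp Require Import all_boot all_order all_algebra.
From mathcomp Require Import ring lra.
Set Implicit Arguments. Unset Strict Implicit. Unset Printing Implicit Defensive.
Import Order.TTheory GRing.Theory Num.Theory.
Local Open Scope ring_scope.

Section RealMatrices.
Variable R : realFieldType.

Definition vdot n (a b : 'rV[R]_n) : R := (a *m b^T) 0 0.

Definition qform n (Q : 'M[R]_n) (x : 'rV[R]_n) : R := (x *m Q *m x^T) 0 0.

Lemma vdotE n (a b : 'rV[R]_n) : vdot a b = \sum_i a 0 i * b 0 i.
Proof. by rewrite /vdot !mxE; apply: eq_bigr => i _; rewrite !mxE. Qed.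

Lemma vdotC n (a b : 'rV[R]_n) : vdot a b = vdot b a.
Proof. by rewrite !vdotE; apply: eq_bigr => i _; rewrite mulrC. Qed.

Lemma vdot_ge0 n (a : 'rV[R]_n) : 0 <= vdot a a.
Proof. by rewrite vdotE; apply: sumr_ge0 => i _; rewrite -expr2 sqr_ge0. Qed.

Lemma vdotBB n (a b : 'rV[R]_n) :
  vdot (a - b) (a - b) = vdot a a - vdot a b - vdot b a + vdot b b.
Proof.
by rewrite !vdotE -!sumrB -big_split /=; apply: eq_bigr => i _; rewrite !mxE; ring.
Qed.

Lemma vdot_row m n (A : 'M[R]_(m, n)) i j : vdot (row i A) (row j A) = (A *m A^T) i j.
Proof. by rewrite /vdot !mxE; apply: eq_bigr => k _; rewrite !mxE. Qed.

Lemma mxtrace_qform m n (W : 'M[R]_(m, n)) (Q : 'M[R]_n) :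
  \tr (W *m Q *m W^T) = \sum_i qform Q (row i W).
Proof.
apply: eq_bigr => i _; rewrite /qform !mxE; apply: eq_bigr => j _.
by rewrite !mxE; congr (_ * _); apply: eq_bigr => k _; rewrite !mxE.
Qed.

Lemma posdef_unitmx n (G : 'M[R]_n) : posdef G -> G \in unitmx.
Proof.
case=> _ Gpos; rewrite unitmxE unitfE; apply/negP => /det0P [v v0 vG].
by have := Gpos v v0; rewrite vG mul0mx mxE ltxx.
Qed.

(* With u = x A^T G^-1 and z = u A, the form is <z, x> = |z|^2 + lam |u|^2,
   and 0 <= |x - z|^2 turns this into the upper bound. *)
Lemma qform_hat_bound s n (A : 'M[R]_(s, n)) (lam : R) (x : 'rV[R]_n) :
  0 <= lam -> posdef (A *m A^T + lam%:M) ->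
  0 <= qform (A^T *m invmx (A *m A^T + lam%:M) *m A) x <= vdot x x.
Proof.
set G := A *m A^T + lam%:M => lam_ge0 Gpos.
have GT : G^T = G by case: Gpos.
pose u := x *m A^T *m invmx G; pose z := u *m A.
have xAT : x *m A^T = u *m G by rewrite mulmxKV ?posdef_unitmx.
have qxz : qform (A^T *m invmx G *m A) x = vdot z x by rewrite /qform /vdot !mulmxA.
have qzu : vdot z x = vdot z z + lam * vdot u u.
  rewrite /vdot; have -> : z *m x^T = u *m (u *m G)^T.
    by rewrite -xAT trmx_mul trmxK mulmxA.
  rewrite [(u *m G)^T]trmx_mul GT /G mulmxDl mul_scalar_mx mulmxDr -scalemxAr.
  by rewrite /z [(u *m A)^T]trmx_mul !mulmxA !mxE.
have := vdot_ge0 (x - z); rewrite vdotBB (vdotC x z).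
have := vdot_ge0 z; have := mulr_ge0 lam_ge0 (vdot_ge0 u).
rewrite qxz; lra.
Qed.

Lemma mxrank_mxsub m n m' n' f g (A : 'M[R]_(m, n)) :
  (\rank (mxsub f g A : 'M_(m', n')) <= \rank A)%N.
Proof.
have -> : mxsub f g A = rowsub f 1%:M *m A *m colsub g 1%:M.
  rewrite mulmx_colsub mulmx1 mul_rowsub_mx mul1mx.
  by apply/matrixP => i j; rewrite !mxE.
by apply: leq_trans (mxrankM_maxl _ _) _; apply: mxrankM_maxr.
Qed.

Lemma orthogonal_unitmx n (U : 'M[R]_n) : orthogonal_mx U -> U \in unitmx.
Proof. by case/mulmx1_unit. Qed.

End RealMatrices.

Section SingularValues.
Variables (R : realFieldType) (K M : nat) (sigma : nat -> R).
Local Notation D := (diag_rect K M sigma).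

Lemma diag_rect_mul_tr (i : 'I_K) :
  (D *m D^T) i i = if (i < M)%N then sigma i ^+ 2 else 0.
Proof.
rewrite mxE; case: ltnP => [iM | Mi].
  rewrite (bigD1 (Ordinal iM)) //= big1 => [|k /negPf ki].
    by rewrite !mxE eqxx addr0 expr2.
  by move: ki; rewrite !mxE -val_eqE eq_sym => /= ->; rewrite mul0r.
rewrite big1 // => k _; rewrite !mxE.
have /negPf -> : (i != k :> nat); last by rewrite mul0r.
by rewrite neq_ltn (leq_trans (ltn_ord k) Mi) orbT.
Qed.

Lemma mxrank_svd (Y : 'M[R]_(K, M)) U V :
  is_svd Y U sigma V -> \rank Y = \rank D.
Proof.
case=> /orthogonal_unitmx Uu /orthogonal_unitmx Vu _ _ ->.
rewrite mxrankMfree ?row_free_unit // -mxrank_tr trmx_mul.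
by rewrite mxrankMfree ?row_free_unit ?unitmx_tr // mxrank_tr.
Qed.

Lemma mxrank_diag_rect_gt j : (j < K)%N -> (j < M)%N ->
  (forall i, (i <= j)%N -> sigma i != 0) -> (j < \rank D)%N.
Proof.
move=> jK jM sigma_neq0.
apply: leq_trans (mxrank_mxsub (widen_ord jK) (widen_ord jM) D).
have -> : mxsub (widen_ord jK) (widen_ord jM) D = diag_mx (\row_(i < j.+1) sigma i).
  apply/matrixP => a b; rewrite !mxE /=.
  by case: (eqVneq a b) => [->|ab]; rewrite ?eqxx ?mulr1n // ifN.
rewrite (@mxrank_unit _ j.+1) // unitmxE det_diag unitfE.
by apply/prodf_neq0 => i _; rewrite mxE sigma_neq0 // -ltnS.
Qed.

Lemma svd_sigma_eq0 (Y : 'M[R]_(K, M)) U V j : is_svd Y U sigma V ->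
  (j < K)%N -> (j < M)%N -> (\rank Y <= j)%N -> sigma j = 0.
Proof.
move=> svdY jK jM; apply: contraTeq => sj_neq0.
rewrite -ltnNge (mxrank_svd svdY); apply: mxrank_diag_rect_gt => // i ij.
have [_ _ sigma_ge0 sigma_mono _] := svdY.
have jKM : (j < minn K M)%N by rewrite leq_min jK jM.
have sj_gt0 : 0 < sigma j by rewrite lt_neqAle eq_sym sj_neq0 sigma_ge0.
by rewrite lt0r_neq0 // (lt_le_trans sj_gt0) ?sigma_mono.
Qed.

Lemma Zmat_rowsub (Y : 'M[R]_(K, M)) V r (hr : (r <= \rank Y)%N) :
  Zmat sigma V hr = rowsub (widen_ord (rank_le_rows hr)) (D *m V).
Proof.
apply/matrixP => i k; rewrite !mxE (bigD1 i) // (bigD1 (widen_ord (rank_le_cols hr) i)) //=.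
rewrite !big1 => [|l li|l li]; rewrite ?mxE //= ifN ?mul0r // eq_sym; exact: li.
Qed.

Lemma svd_tail_sum (Y : 'M[R]_(K, M)) U V r : is_svd Y U sigma V -> (r <= \rank Y)%N ->
  \sum_(i < K | (r <= i)%N) (D *m D^T) i i = \sum_(r <= i < \rank Y) sigma i ^+ 2.
Proof.
move=> svdY hr; pose E j := if (j < M)%N then sigma j ^+ 2 else 0.
rewrite (eq_bigr (fun i : 'I_K => E i)) => [|i _]; last exact: diag_rect_mul_tr.
rewrite -(big_geq_mkord r K xpredT) (big_cat_nat hr (rank_leq_row Y)) /=.
rewrite [X in _ + X]big_nat_cond [X in _ + X]big1 ?addr0 => [|j /andP[/andP[Yj jK] _]].
  by apply: eq_big_nat => j /andP[_ jY]; rewrite /E (leq_trans jY (rank_leq_col Y)).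
by rewrite /E; case: ifP => // jM; rewrite (svd_sigma_eq0 svdY) // expr0n.
Qed.

End SingularValues.

Section RegularizedFit.
Variables (R : realFieldType) (N M : nat) (X : 'M[R]_(N, M)) (lam : R).
Hypothesis lam_ge0 : 0 <= lam.

Definition hat_mx (S : {set 'I_N}) : 'M[R]_M :=
  (rows_of X S)^T *m invmx (gram X lam S) *m rows_of X S.

Lemma J_qform K (Y : 'M[R]_(K, M)) S : J X lam Y S = \sum_i qform (hat_mx S) (row i Y).
Proof. by rewrite /J -mxtrace_qform /hat_mx !mulmxA. Qed.

Lemma J_orthogonal_mull K (U : 'M[R]_K) (W : 'M[R]_(K, M)) S :
  orthogonal_mx U -> J X lam (U *m W) S = J X lam W S.
Proof.
by move=> U_orth; rewrite /J trmx_mul !mulmxA mxtrace_mulC !mulmxA U_orth mul1mx.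
Qed.

Lemma J_svd_gap K (Y : 'M[R]_(K, M)) U sigma V r (hr : (r <= \rank Y)%N) S :
  is_svd Y U sigma V -> posdef (gram X lam S) ->
  J X lam (Zmat sigma V hr) S <= J X lam Y S
    <= J X lam (Zmat sigma V hr) S + \sum_(r <= i < \rank Y) sigma i ^+ 2.
Proof.
move=> svdY Spos; have [U_orth V_orth _ _ defY] := svdY.
set W := diag_rect K M sigma *m V.
pose F i := qform (hat_mx S) (row i W).
have JY : J X lam Y S = \sum_i F i by rewrite defY -mulmxA J_orthogonal_mull // J_qform.
have JZ : J X lam (Zmat sigma V hr) S = \sum_(i < K | (i < r)%N) F i.
  rewrite Zmat_rowsub J_qform (big_ord_narrow (rank_le_rows hr)).
  by apply: eq_bigr => i _; rewrite row_rowsub.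
have tail : \sum_(i < K | (r <= i)%N) vdot (row i W) (row i W)
            = \sum_(r <= i < \rank Y) sigma i ^+ 2.
  rewrite -(svd_tail_sum svdY hr); apply: eq_bigr => i _.
  by rewrite vdot_row /W trmx_mul mulmxA -(mulmxA _ V) (mulmx1C V_orth) mulmx1.
have F_bound i : 0 <= F i <= vdot (row i W) (row i W).
  exact: qform_hat_bound.
have lowF : \sum_(i < K | ~~ (r <= i)%N) F i = \sum_(i < K | (i < r)%N) F i.
  by apply: eq_bigl => i; rewrite -ltnNge.
rewrite JY JZ [\sum_(i < K) F i](bigID (fun i : 'I_K => (r <= i)%N)) /= lowF -tail.
apply/andP; split.
  by rewrite lerDr; apply: sumr_ge0 => i _; case/andP: (F_bound i).
by rewrite addrC lerD2l; apply: ler_sum => i _; case/andP: (F_bound i).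
Qed.

End RegularizedFit.

Lemma eq_argmax_of_gap (R : realFieldType) (I : eqType) (P : I -> Prop) (F H : I -> R)
    (eps : R) (a b c : I) :
  (forall i, P i -> H i <= F i <= H i + eps) -> P a -> P c ->
  (forall i, P i -> i != a -> H i <= H b) -> eps < H a - H b ->
  (forall i, P i -> F i <= F c) -> c = a.
Proof.
move=> FH Pa Pc Hb gap Fc; apply/eqP/negPn/negP => ca.
have /andP[_ Fc_le] := FH c Pc; have /andP[Ha_le _] := FH a Pa.
have := Hb c Pc ca; have := Fc a Pa; lra.
Qed.

Theorem theorem3 (R : realFieldType) (N Ny M p : nat) (hpN : (p <= N)%N)
  (X : 'M[R]_(N, M)) (Yt : 'M[R]_(Ny, M)) (lam : R) (hlam : 0 <= lam)
  (U : 'M[R]_Ny) (sigma : nat -> R) (V : 'M[R]_M)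
  (hsvd : is_svd Yt U sigma V)
  (r : nat) (hr : (r <= \rank Yt)%N)
  (sr sr2 : nat -> 'I_N) (Sr : nat -> {set 'I_N})
  (hgr : greedy X lam (Zmat sigma V hr) p sr Sr)
  (hgr2 : second_best X lam (Zmat sigma V hr) p sr sr2 Sr)
  (so : nat -> 'I_N) (So : nat -> {set 'I_N})
  (hgo : greedy X lam Yt p so So)
  (k' : nat) (hk' : (1 <= k' <= p)%N)
  (hgap : forall k, (1 <= k <= k')%N ->
     J X lam (Zmat sigma V hr) (Sr k) - J X lam (Zmat sigma V hr) (sr2 k |: Sr k.-1)
       > \sum_(r <= i < \rank Yt) sigma i ^+ 2) :
  Sr k' = So k'.
Proof.
have [Sr0 step_r] := hgr; have [So0 step_o] := hgo.
have le_gain Y S (i j : 'I_N) :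
    (gain X lam Y S i <= gain X lam Y S j) = (J X lam Y (i |: S) <= J X lam Y (j |: S)).
  by rewrite /gain lerD2r.
case/andP: hk' => _ k'p.
suff agree k : (k <= k')%N -> Sr k = So k by exact: agree.
elim: k => [_|k IH kk']; first by rewrite Sr0 So0.
have kp : (1 <= k.+1 <= p)%N by rewrite /= (leq_trans kk' k'p).
have [fr _ Sr_next] := step_r _ kp; have [fo max_o ->] := step_o _ kp.
have [_ _ max_r2] := hgr2 _ kp.
have gap := hgap k.+1 kk'; rewrite Sr_next in gap *.
rewrite /= -(IH (ltnW kk')) in fo max_o *; congr (_ |: _).
apply/esym/(eq_argmax_of_gap (P := feasible X lam (Sr k))
  (F := fun i => J X lam Yt (i |: Sr k)) (H := fun i => J X lam (Zmat sigma V hr) (i |: Sr k))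
  (b := sr2 k.+1) _ fr fo _ gap).
- by move=> i [_ Si_pos]; apply: J_svd_gap hsvd Si_pos.
- by move=> i fi ia; rewrite -le_gain; apply: max_r2.
- by move=> i fi; rewrite -le_gain; apply: max_o.
Qed.
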